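(* Let $G$ be a finite abelian group and let $M$ be a finite inverse $\hat G$-linear monoid of dimension $n$. Then there exists an injective monoid homomorphism $\phi_M:M\to\mathrm{End}_{\hat G}(M)\cong I_n(\hat G)$ such that $\phi_M(x^* )=\phi_M(x)^*$ and $\phi_M(gx)=g\phi_M(x)$ for all $x\in M$ and $g\in G$.
   Context: $\hat G=G\sqcup\{0\}$ with $0$ absorbing. $\mathrm{Vect}_{\hat G}$: objects are finite pointed sets with an action of $\hat G$ ($0v=0$, $g0=0$) such that $G$ acts freely on nonzero elements; morphisms $f$ satisfy $f(0)=0$, $f(gv)=gf(v)$, $f(v_1)=f(v_2)\neq0\Rightarrow Gv_1=Gv_2$. A $\hat G$-linear monoid is a finite monoid $M$ with absorbing element $0_M$ containing $G$ as a subgroup of units commuting with all of $M$, with $G$ acting freely by translation on $M\setminus\{0_M\}$; thus $M$ is an object of $\mathrm{Vect}_{\hat G}$, its dimension is the number of $G$-orbits in $M\setminus\{0_M\}$, and $\mathrm{End}_{\hat G}(M)$ is its endomorphism monoid in $\mathrm{Vect}_{\hat G}$, with $g\phi$ denoting the composite of $\phi$ with scalar multiplication by $g$. $I_n(\hat G)$ is the monoid of $n\times n$ matrices with entries in $\hat G$ having at most one nonzero entry in each row and column, under matrix multiplication; it is an inverse monoid and isomorphic to $\mathrm{End}_{\hat G}(\hat G^{\oplus n})$. A monoid is inverse if each $x$ has a unique $x^*$ with $xx^*x=x$ and $x^*xx^*=x^*$ (its $*$-inverse). *)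

From mathcomp Require Import all_boot all_order all_algebra all_fingroup.
Set Implicit Arguments. Unset Strict Implicit. Unset Printing Implicit Defensive.

Local Open Scope group_scope.

Definition is_Ghat_linear_monoid (G : finGroupType) (T : finType)
  (mul : T -> T -> T) (one zero : T) (iota : G -> T) : Prop :=
  associative mul /\ left_id one mul /\ right_id one mul /\
  (forall x, mul zero x = zero /\ mul x zero = zero) /\
  (* G is a subgroup of the units (injective monoid map, hence into units) *)
  injective iota /\ iota 1 = one /\
  (forall g h : G, iota (g * h) = mul (iota g) (iota h)) /\
  (forall (g : G) x, mul (iota g) x = mul x (iota g)) /\
  (forall (g : G) x, x != zero -> mul (iota g) x = x -> g = 1).

Definition is_star_inv (T : Type) (mul : T -> T -> T) (x y : T) : Prop :=
  mul (mul x y) x = x /\ mul (mul y x) y = y.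

Definition is_inverse_monoid (T : Type) (mul : T -> T -> T) : Prop :=
  forall x, exists! y, is_star_inv mul x y.

Definition Gorbit (G : finGroupType) (T : finType) (mul : T -> T -> T)
  (iota : G -> T) (x : T) : {set T} :=
  [set mul (iota g) x | g : G].

Definition Ghat_dim (G : finGroupType) (T : finType) (mul : T -> T -> T)
  (zero : T) (iota : G -> T) : nat :=
  #|[set Gorbit mul iota x | x in [set x | x != zero]]|.

(* None plays the role of 0 in Ĝ. *)
Definition is_rook (G : finGroupType) (n : nat) (A : 'M[option G]_n) : bool :=
  [forall i, forall j1, forall j2,
     (A i j1 != None) && (A i j2 != None) ==> (j1 == j2)] &&
  [forall j, forall i1, forall i2,
     (A i1 j != None) && (A i2 j != None) ==> (i1 == i2)].

(* matrix product in Ĝ: each (i,j) entry has at most one nonzero summand *)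
Definition rook_mul (G : finGroupType) (n : nat) (A B : 'M[option G]_n)
  : 'M[option G]_n :=
  \matrix_(i, j)
    if [pick k | (A i k != None) && (B k j != None)] is Some k then
      match A i k, B k j with
      | Some a, Some b => Some (a * b)
      | _, _ => None
      end
    else None.

Definition rook_one (G : finGroupType) (n : nat) : 'M[option G]_n :=
  \matrix_(i, j) if i == j then Some 1 else None.

Definition rook_scale (G : finGroupType) (n : nat) (g : G)
  (A : 'M[option G]_n) : 'M[option G]_n :=
  \matrix_(i, j) omap (fun a => g * a) (A i j).

From mathcomp Require Import all_boot all_order all_algebra all_fingroup.
Set Implicit Arguments. Unset Strict Implicit. Unset Printing Implicit Defensive.
Local Open Scope group_scope.

(* This is the Wagner-Preston representation, written in coordinates.  In an
   inverse monoid idempotents commute, and x acts on M by the partial left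
   translation y |-> x y, defined (i.e. nonzero) exactly on the principal right
   ideal x^* x M = {y | x^* x y = y}; this is a faithful representation of M by
   partial injections that preserves the *-inverse.  Each of these maps fixes 0
   and commutes with translation by G, and is injective away from 0, so in a
   basis of representatives of the G-orbits of M \ {0} its matrix has at most
   one nonzero entry, an element of G, in each row and column.  Since G is
   abelian, composition of such maps is the product of their matrices. *)

Section InverseSemigroup.

Variables (T : choiceType) (mul : T -> T -> T).
Local Notation "x ⊙ y" := (mul x y) (at level 40, left associativity).
Hypotheses (mulA : associative mul) (inv : is_inverse_monoid mul).

Lemma star_exists x : exists y, (x ⊙ y ⊙ x == x) && (y ⊙ x ⊙ y == y).
Proof. by case: (inv x) => y [[xyx yxy] _]; exists y; rewrite xyx yxy !eqxx. Qed.

Definition star x := xchoose (star_exists x).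

Lemma star_inv x : is_star_inv mul x (star x).
Proof. by case/andP: (xchooseP (star_exists x)) => /eqP ? /eqP. Qed.

Lemma star_uniq x y : is_star_inv mul x y -> y = star x.
Proof.
by case: (inv x) => z [_ uniq_z] xy; rewrite -(uniq_z _ xy) -(uniq_z _ (star_inv x)).
Qed.

Lemma mul_star_mul x : x ⊙ star x ⊙ x = x. Proof. by case: (star_inv x). Qed.
Lemma star_mul_star x : star x ⊙ x ⊙ star x = star x. Proof. by case: (star_inv x). Qed.

Lemma star_idem e : e ⊙ e = e -> star e = e.
Proof. by move=> ee; apply/esym/star_uniq; split; rewrite ee. Qed.

Lemma idem_mul e f : e ⊙ e = e -> f ⊙ f = f -> e ⊙ f ⊙ (e ⊙ f) = e ⊙ f.
Proof.
move=> ee ff; set a := star (e ⊙ f).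
have efa : e ⊙ f ⊙ a ⊙ (e ⊙ f) = e ⊙ f by apply: mul_star_mul.
have aef : a ⊙ (e ⊙ f) ⊙ a = a by apply: star_mul_star.
(* f a e is a *-inverse of e f as well, so it is a; then a is idempotent. *)
have fae : f ⊙ a ⊙ e = a.
  apply: star_uniq; split.
    transitivity (e ⊙ (f ⊙ f) ⊙ a ⊙ (e ⊙ e) ⊙ f); first by rewrite !mulA.
    by rewrite ee ff -[RHS]efa !mulA.
  transitivity (f ⊙ (a ⊙ (e ⊙ f) ⊙ a) ⊙ e); last by rewrite aef.
  transitivity (f ⊙ a ⊙ (e ⊙ e) ⊙ (f ⊙ f) ⊙ a ⊙ e); first by rewrite !mulA.
  by rewrite ee ff !mulA.
have aa : a ⊙ a = a.
  rewrite -{1 2}fae; transitivity (f ⊙ (a ⊙ (e ⊙ f) ⊙ a) ⊙ e); first by rewrite !mulA.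
  by rewrite aef.
have : e ⊙ f = star a by apply: star_uniq.
by rewrite star_idem // => ->.
Qed.

Lemma idem_comm e f : e ⊙ e = e -> f ⊙ f = f -> e ⊙ f = f ⊙ e.
Proof.
move=> ee ff; apply/esym; rewrite -(star_idem (idem_mul ee ff)).
apply: star_uniq; split.
  transitivity (e ⊙ (f ⊙ f) ⊙ (e ⊙ e) ⊙ f); first by rewrite !mulA.
  by rewrite ee ff -mulA idem_mul.
transitivity (f ⊙ (e ⊙ e) ⊙ (f ⊙ f) ⊙ e); first by rewrite !mulA.
by rewrite ee ff -mulA idem_mul.
Qed.

Definition dom_id x := star x ⊙ x.
Definition ran_id x := x ⊙ star x.

Lemma dom_id_idem x : dom_id x ⊙ dom_id x = dom_id x.
Proof. by rewrite /dom_id mulA star_mul_star. Qed.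

Lemma ran_id_idem x : ran_id x ⊙ ran_id x = ran_id x.
Proof. by rewrite /ran_id mulA mul_star_mul. Qed.

Lemma dom_ran_comm x y : dom_id x ⊙ ran_id y = ran_id y ⊙ dom_id x.
Proof. exact: idem_comm (dom_id_idem x) (ran_id_idem y). Qed.

Lemma star_mul x y : star (x ⊙ y) = star y ⊙ star x.
Proof.
apply/esym/star_uniq; split.
  transitivity (x ⊙ (ran_id y ⊙ dom_id x) ⊙ y); first by rewrite !mulA.
  rewrite -dom_ran_comm.
  transitivity (x ⊙ star x ⊙ x ⊙ (y ⊙ star y ⊙ y)); first by rewrite !mulA.
  by rewrite !mul_star_mul.
transitivity (star y ⊙ (dom_id x ⊙ ran_id y) ⊙ star x); first by rewrite !mulA.
rewrite dom_ran_comm.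
transitivity (star y ⊙ y ⊙ star y ⊙ (star x ⊙ x ⊙ star x)); first by rewrite !mulA.
by rewrite !star_mul_star.
Qed.

Lemma dom_id_mul x y : dom_id (x ⊙ y) = star y ⊙ dom_id x ⊙ y.
Proof. by rewrite /dom_id star_mul !mulA. Qed.

Lemma dom_id1 (one : T) : left_id one mul -> dom_id one = one.
Proof. by move=> mul1x; rewrite /dom_id star_idem mul1x. Qed.

Lemma dom_id_mulP x y z :
  dom_id (x ⊙ y) ⊙ z = z <-> dom_id y ⊙ z = z /\ dom_id x ⊙ (y ⊙ z) = y ⊙ z.
Proof.
rewrite dom_id_mul; split=> [E|[Ey Ex]]; last by rewrite -mulA -mulA Ex mulA.
split.
  transitivity (dom_id y ⊙ (star y ⊙ dom_id x ⊙ y ⊙ z)); first by rewrite E.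
  by rewrite {1}/dom_id !mulA star_mul_star -[RHS]E !mulA.
rewrite -{1}E.
transitivity (dom_id x ⊙ ran_id y ⊙ dom_id x ⊙ y ⊙ z); first by rewrite !mulA.
rewrite dom_ran_comm -(mulA (ran_id y)) dom_id_idem -[in RHS]E.
by rewrite /ran_id !mulA.
Qed.

Section PartialTranslation.

Variable zero : T.
Hypotheses (mul0x : left_zero zero mul) (mulx0 : right_zero zero mul).

Definition ltrans x y := if dom_id x ⊙ y == y then x ⊙ y else zero.

Lemma ltransx0 x : ltrans x zero = zero.
Proof. by rewrite /ltrans mulx0 eqxx mulx0. Qed.

Lemma ltrans0x y : ltrans zero y = zero.
Proof. by rewrite /ltrans mul0x; case: eqP. Qed.

Lemma ltrans_dom x : ltrans x (dom_id x) = x.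
Proof. by rewrite /ltrans dom_id_idem eqxx /dom_id mulA mul_star_mul. Qed.

Lemma ltrans_inj x y1 y2 : ltrans x y1 = ltrans x y2 -> ltrans x y1 != zero -> y1 = y2.
Proof.
rewrite /ltrans; case: eqP => E1; case: eqP => E2 E; rewrite ?E ?eqxx // => _.
by rewrite -E1 -E2 /dom_id -!mulA E.
Qed.

Lemma ltrans1 one : left_id one mul -> ltrans one =1 id.
Proof. by move=> mul1x y; rewrite /ltrans dom_id1 // !mul1x eqxx. Qed.

Lemma ltransM x y z : ltrans (x ⊙ y) z = ltrans x (ltrans y z).
Proof.
rewrite [ltrans y z]/ltrans; have [Ey|Ny] := eqVneq (dom_id y ⊙ z) z; last first.
  by rewrite ltransx0 /ltrans; case: eqP => // /dom_id_mulP[E _]; rewrite E eqxx in Ny.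
rewrite /ltrans; have [Ex|Nx] := eqVneq (dom_id x ⊙ (y ⊙ z)) (y ⊙ z).
  by rewrite ((dom_id_mulP x y z).2 (conj Ey Ex)) eqxx mulA.
by case: eqP => // /dom_id_mulP[_ E]; rewrite E eqxx in Nx.
Qed.

Lemma ltrans_faithful x y : ltrans x =1 ltrans y -> x = y.
Proof.
move=> Lxy; have Lx := ltrans_dom x; have Ly := ltrans_dom y.
rewrite Lxy in Lx; rewrite -Lxy in Ly.
have [x0|nx] := eqVneq x zero; first by rewrite -Ly x0 ltrans0x.
have [y0|ny] := eqVneq y zero; first by rewrite -Lx y0 ltrans0x.
move: Lx Ly; rewrite /ltrans.
case: eqP => [Ex Lx|_ x0]; last by rewrite -x0 eqxx in nx.
case: eqP => [Ey Ly|_ y0]; last by rewrite -y0 eqxx in ny.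
have dxy : dom_id x = dom_id y by rewrite -Ex idem_comm ?dom_id_idem.
by rewrite -Lx dxy /dom_id mulA mul_star_mul.
Qed.

End PartialTranslation.

End InverseSemigroup.

Section GhatLinearMonoid.

Variables (G : finGroupType) (T : finType) (mul : T -> T -> T) (one zero : T).
Variable iota : G -> T.
Local Notation "x ⊙ y" := (mul x y) (at level 40, left associativity).
Hypotheses (mulA : associative mul) (mul1x : left_id one mul).
Hypotheses (mul0x : left_zero zero mul) (mulx0 : right_zero zero mul).
Hypotheses (iota1 : iota 1 = one) (iotaM : forall g h, iota (g * h) = iota g ⊙ iota h).
Hypothesis iota_central : forall g x, iota g ⊙ x = x ⊙ iota g.
Hypothesis iota_free : forall g x, x != zero -> iota g ⊙ x = x -> g = 1.
Hypothesis G_abelian : forall g h : G, g * h = h * g.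

Lemma iotaMx g h y : iota g ⊙ (iota h ⊙ y) = iota (g * h) ⊙ y.
Proof. by rewrite iotaM mulA. Qed.

Lemma iotaK g y : iota g^-1 ⊙ (iota g ⊙ y) = y.
Proof. by rewrite iotaMx mulVg iota1 mul1x. Qed.

Lemma iota_eq0 g y : (iota g ⊙ y == zero) = (y == zero).
Proof.
apply/eqP/eqP => [E|->]; last exact: mulx0.
by rewrite -(iotaK g y) E mulx0.
Qed.

Lemma iota_free_eq a b y : y != zero -> iota a ⊙ y = iota b ⊙ y -> a = b.
Proof.
move=> nz E; suff Eba : b^-1 * a = 1 by rewrite -(mulKVg b a) Eba mulg1.
by apply: (iota_free nz); rewrite -iotaMx E iotaK.
Qed.

Lemma mul_iota x g y : x ⊙ (iota g ⊙ y) = iota g ⊙ (x ⊙ y).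
Proof. by rewrite mulA -iota_central -mulA. Qed.

Lemma iota_mul_iota g h a b : iota g ⊙ a ⊙ (iota h ⊙ b) = iota (g * h) ⊙ (a ⊙ b).
Proof. by rewrite -mulA mul_iota iotaMx. Qed.

Local Notation Gorb := (Gorbit mul iota).

Definition orbits := [set Gorb x | x in [set x | x != zero]].

Definition orbit_rep (i : 'I_#|orbits|) : T := odflt zero [pick x in enum_val i].

Definition coef (F : T -> T) (i j : 'I_#|orbits|) : option G :=
  [pick g | F (orbit_rep j) == iota g ⊙ orbit_rep i].

Definition mx_of (F : T -> T) : 'M[option G]_#|orbits| := \matrix_(i, j) coef F i j.

Lemma Gorbit_self y : y \in Gorb y.
Proof. by apply/imsetP; exists 1; rewrite ?iota1 ?mul1x. Qed.

Lemma Gorbit_transl w y : w \in Gorb y -> Gorb w = Gorb y.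
Proof.
case/imsetP => g _ ->; apply/setP => u.
apply/imsetP/imsetP => -[h _ ->]; first by exists (h * g); rewrite ?iotaMx.
by exists (h * g^-1); rewrite ?iotaMx ?mulgKV.
Qed.

Lemma orbit_rep_spec i : orbit_rep i != zero /\ Gorb (orbit_rep i) = enum_val i.
Proof.
have /imsetP[y] := enum_valP i; rewrite inE => ny Ei.
rewrite /orbit_rep; case: pickP => [w|none] /=; last first.
  by have := none y; rewrite Ei Gorbit_self.
rewrite Ei => yw; split; last exact: Gorbit_transl.
by case/imsetP: yw => g _ ->; rewrite iota_eq0.
Qed.

Lemma orbit_rep_nz i : orbit_rep i != zero.
Proof. by case: (orbit_rep_spec i). Qed.

Lemma orbit_rep_decomp w : w != zero -> exists i g, w = iota g ⊙ orbit_rep i.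
Proof.
move=> nw; have Ow : Gorb w \in orbits by apply/imsetP; exists w; rewrite ?inE.
pose i := enum_rank_in Ow (Gorb w).
have : orbit_rep i \in Gorb w.
  by rewrite -(enum_rankK_in Ow Ow) -(proj2 (orbit_rep_spec i)) Gorbit_self.
by case/imsetP => g _ E; exists i, g^-1; rewrite E iotaK.
Qed.

Lemma orbit_rep_inj i j g : orbit_rep j = iota g ⊙ orbit_rep i -> j = i.
Proof.
move=> E; apply: enum_val_inj; rewrite -!(proj2 (orbit_rep_spec _)).
by apply: Gorbit_transl; rewrite E; apply/imsetP; exists g.
Qed.

Lemma coef_Some F i j g : coef F i j = Some g <-> F (orbit_rep j) = iota g ⊙ orbit_rep i.
Proof.
rewrite /coef; case: pickP => [h /eqP Fh|none]; last first.
  by split=> // E; have := none g; rewrite E eqxx.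
split=> [[<-] //|E]; congr Some.
by apply: (iota_free_eq (orbit_rep_nz i)); rewrite -Fh.
Qed.

Lemma coef_None F i j : coef F i j = None -> forall g, F (orbit_rep j) != iota g ⊙ orbit_rep i.
Proof. by move=> c0 g; apply/eqP => /coef_Some; rewrite c0. Qed.

Lemma eq_mx_of F F' : F =1 F' -> mx_of F = mx_of F'.
Proof. by move=> FF'; apply/matrixP => i j; rewrite !mxE /coef FF'. Qed.

Lemma mx_of_id : mx_of id = rook_one G #|orbits|.
Proof.
apply/matrixP => i j; rewrite !mxE; have [->|ne] := eqVneq i j.
  by apply/coef_Some; rewrite iota1 mul1x.
case E: (coef _ i j) => [g|] //; move/coef_Some/orbit_rep_inj: E => E.
by rewrite E eqxx in ne.
Qed.

Section GLinearMaps.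

Variables F F' : T -> T.
Hypotheses (F0 : F zero = zero) (F_iota : forall g y, F (iota g ⊙ y) = iota g ⊙ F y).
Hypotheses (F'0 : F' zero = zero) (F'_iota : forall g y, F' (iota g ⊙ y) = iota g ⊙ F' y).

Lemma mx_of_inj : mx_of F = mx_of F' -> F =1 F'.
Proof.
move=> /matrixP FF'.
have coefE i j : coef F i j = coef F' i j by have := FF' i j; rewrite !mxE.
have on_reps j : F (orbit_rep j) = F' (orbit_rep j).
  have [z|nz] := eqVneq (F (orbit_rep j)) zero.
    have [z'|nz'] := eqVneq (F' (orbit_rep j)) zero; first by rewrite z z'.
    case: (orbit_rep_decomp nz') => i [g E].
    by have /coef_Some := E; rewrite -coefE => /coef_Some ->.
  case: (orbit_rep_decomp nz) => i [g E].
  by have /coef_Some := E; rewrite coefE => /coef_Some ->.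
move=> y; have [->|ny] := eqVneq y zero; first by rewrite F0 F'0.
by case: (orbit_rep_decomp ny) => j [g ->]; rewrite F_iota F'_iota on_reps.
Qed.

Lemma mx_of_comp : mx_of (F \o F') = rook_mul (mx_of F) (mx_of F').
Proof.
apply/matrixP => i j; rewrite !mxE.
case: pickP => [k|none]; rewrite ?mxE.
  case Ea: (coef F i k) => [a|]; case Eb: (coef F' k j) => [b|] //= _.
  move/coef_Some: Ea => Ea; move/coef_Some: Eb => Eb.
  by apply/coef_Some; rewrite /= Eb F_iota Ea iotaMx G_abelian.
case E: (coef _ i j) => [g|] //; move/coef_Some: E => /= E.
have nz : F' (orbit_rep j) != zero.
  apply: contra_neq (orbit_rep_nz i) => F'j0.
  by apply/eqP; rewrite -(iota_eq0 g) -E /= F'j0 F0.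
case: (orbit_rep_decomp nz) => k [b Eb].
have Ea : F (orbit_rep k) = iota (b^-1 * g) ⊙ orbit_rep i.
  by rewrite -iotaMx -E Eb F_iota iotaK.
by have := none k; rewrite !mxE; move/coef_Some: Ea => ->; move/coef_Some: Eb => ->.
Qed.

Lemma mx_of_scale g : mx_of (fun y => iota g ⊙ F y) = rook_scale g (mx_of F).
Proof.
apply/matrixP => i j; rewrite !mxE.
case Ea: (coef F i j) => [a|] /=.
  by apply/coef_Some; move/coef_Some: Ea => ->; rewrite iotaMx.
case E: (coef _ i j) => [h|] //; move/coef_Some: E => E.
by have /eqP[] := coef_None Ea (g^-1 * h); rewrite -iotaMx -E iotaK.
Qed.

Lemma mx_of_rook : (forall y1 y2, F y1 = F y2 -> F y1 != zero -> y1 = y2) ->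
  is_rook (mx_of F).
Proof.
move=> F_inj; apply/andP; split; apply/'forall_'forall_'forall_implyP => i j1 j2;
  rewrite !mxE.
  case Ea: (coef F i j1) => [a|] //; case Eb: (coef F i j2) => [b|] // _.
  move/coef_Some: Ea => Ea; move/coef_Some: Eb => Eb.
  have E : F (iota (b * a^-1) ⊙ orbit_rep j1) = F (orbit_rep j2).
    by rewrite F_iota Ea Eb iotaMx mulgKV.
  have := F_inj _ _ E; rewrite E Eb iota_eq0 orbit_rep_nz => /(_ isT) /esym.
  by move/orbit_rep_inj => ->.
case Ea: (coef F j1 i) => [a|] //; case Eb: (coef F j2 i) => [b|] // _.
move/coef_Some: Ea => Ea; move/coef_Some: Eb => Eb.
have E : orbit_rep j1 = iota (a^-1 * b) ⊙ orbit_rep j2 by rewrite -iotaMx -Eb Ea iotaK.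
by rewrite (orbit_rep_inj E).
Qed.

End GLinearMaps.

Hypothesis inv : is_inverse_monoid mul.
Local Notation star := (star inv).
Local Notation dom_id := (dom_id inv).
Local Notation ltrans := (ltrans inv zero).

Lemma star_iota g x : star (iota g ⊙ x) = iota g^-1 ⊙ star x.
Proof.
apply/esym/star_uniq; split; rewrite !iota_mul_iota ?mulgV ?mulVg mul1g.
  by rewrite mul_star_mul.
by rewrite star_mul_star.
Qed.

Lemma dom_id_iota g x : dom_id (iota g ⊙ x) = dom_id x.
Proof. by rewrite /dom_id star_iota iota_mul_iota mulVg iota1 mul1x. Qed.

Lemma ltrans_iota_r x g y : ltrans x (iota g ⊙ y) = iota g ⊙ ltrans x y.
Proof.
rewrite /ltrans mul_iota; have [E|E] := eqVneq (dom_id x ⊙ y) y.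
  by rewrite E eqxx mul_iota.
rewrite mulx0; case: eqP => // /(congr1 (mul (iota g^-1))).
by rewrite !iotaK => E'; rewrite E' eqxx in E.
Qed.

Lemma ltrans_iota_l g x y : ltrans (iota g ⊙ x) y = iota g ⊙ ltrans x y.
Proof. by rewrite /ltrans dom_id_iota; case: eqP; rewrite ?mulA ?mulx0. Qed.

Lemma rook_representation : exists phi : T -> 'M[option G]_#|orbits|,
  [/\ forall x, is_rook (phi x), injective phi, phi one = rook_one G #|orbits|,
      forall x y, phi (x ⊙ y) = rook_mul (phi x) (phi y) &
      forall g x, phi (iota g ⊙ x) = rook_scale g (phi x)].
Proof.
have Lx0 x : ltrans x zero = zero by apply: ltransx0.
have L_iota x g y : ltrans x (iota g ⊙ y) = iota g ⊙ ltrans x y by apply: ltrans_iota_r.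
exists (fun x => mx_of (ltrans x)); split.
- by move=> x; apply: mx_of_rook => //; apply: ltrans_inj.
- by move=> x y Exy; apply: (ltrans_faithful mulA mul0x); apply: mx_of_inj Exy.
- by rewrite -mx_of_id; apply: eq_mx_of; apply: ltrans1.
- by move=> x y; rewrite -mx_of_comp //; apply: eq_mx_of => z; apply: ltransM.
- by move=> g x; rewrite -mx_of_scale //; apply: eq_mx_of => y; apply: ltrans_iota_l.
Qed.

End GhatLinearMonoid.

Theorem mainTheorem6 (G : finGroupType) (T : finType)
  (mul : T -> T -> T) (one zero : T) (iota : G -> T) (n : nat) :
  abelian [set: G] ->
  is_Ghat_linear_monoid mul one zero iota ->
  is_inverse_monoid mul ->
  n = Ghat_dim mul zero iota ->
  exists phi : T -> 'M[option G]_n,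
    (forall x, is_rook (phi x)) /\
    injective phi /\
    phi one = rook_one G n /\
    (forall x y, phi (mul x y) = rook_mul (phi x) (phi y)) /\
    (forall x y, is_star_inv mul x y ->
                 is_star_inv (@rook_mul G n) (phi x) (phi y)) /\
    (forall (g : G) x, phi (mul (iota g) x) = rook_scale g (phi x)).
Proof.
move=> /centsP abG [mulA [mul1x [_ [mul0 [_ [iota1 [iotaM [iota_c iota_free]]]]]]]] inv ->.
have G_abelian (g h : G) : g * h = h * g by apply: abG; rewrite inE.
have [phi [rook inj hom1 homM homG]] := rook_representation mulA mul1x
  (fun x => proj1 (mul0 x)) (fun x => proj2 (mul0 x)) iota1 iotaM iota_c iota_free
  G_abelian inv.
exists phi; do 4!split=> //.
by split=> // x y [xyx yxy]; split; rewrite -!homM ?xyx ?yxy.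
Qed.
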